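(* For every $n\ge1$, $x^n\,\hat B_n^-(1/x)=\hat B_n^+(x)$, where $\hat B_n^-(x)=\sum_{\sigma\in\mathcal B_n,\ \sigma(1)<0}x^{\hat d_B(\sigma)}$ and $\hat B_n^+(x)=\sum_{\sigma\in\mathcal B_n,\ \sigma(1)>0}x^{\hat d_B(\sigma)}$.
   Context: $\mathcal B_n$ is the set of signed permutations (bijections $\sigma$ of $\{\pm1,\dots,\pm n\}$ with $\sigma(-i)=-\sigma(i)$), written as words $\sigma(1)\cdots\sigma(n)$ with $\sigma(0)=0$. $\hat d_B(\sigma)$ is the number of $i\in\{0\}\cup[n-1]$ such that either $\sigma(i)<\sigma(i+1)$ and $i$ is even, or $\sigma(i)>\sigma(i+1)$ and $i$ is odd. *)

From mathcomp Require Import all_boot all_order all_algebra all_fingroup.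
Set Implicit Arguments. Unset Strict Implicit. Unset Printing Implicit Defensive.
Import Order.TTheory GRing.Theory Num.Theory.

(* A signed permutation of {±1,...,±n} is encoded by a pair (s, e) with
   s : 'S_n (the underlying permutation of absolute values, shifted by one)
   and e : sign vector (true = negative). *)
Definition signed_perm (n : nat) := ({perm 'I_n} * {ffun 'I_n -> bool})%type.

Definition sp_entry n (w : signed_perm n) (j : 'I_n) : int :=
  ((if w.2 j then -1 else 1) * ((w.1 j).+1)%:Z)%R.

(* sigma(k) for k in {0,...,n}; value 0 at k = 0 (and, irrelevantly, beyond n) *)
Definition sp_val n (w : signed_perm n) (k : nat) : int :=
  if k is k'.+1 then
    (if (insub k' : option 'I_n) is Some j then sp_entry w j else 0%R)
  else 0%R.

Definition dBhat n (w : signed_perm n) : nat :=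
  #|[set i : 'I_n | ((sp_val w i < sp_val w i.+1)%R && ~~ odd i)
                   || ((sp_val w i > sp_val w i.+1)%R && odd i)]|.

Definition Bhat_minus (R : nzRingType) n (x : R) : R :=
  \sum_(w : signed_perm n | (sp_val w 1 < 0%R)%R) x ^+ dBhat w.

Definition Bhat_plus (R : nzRingType) n (x : R) : R :=
  \sum_(w : signed_perm n | (sp_val w 1 > 0%R)%R) x ^+ dBhat w.

From mathcomp Require Import all_boot all_order all_algebra all_fingroup.
Import Order.TTheory GRing.Theory Num.Theory.
Set Implicit Arguments.

(* Flipping every sign, sigma |-> -sigma, is an involution of B_n exchanging
   sigma(1) < 0 and sigma(1) > 0.  Consecutive letters of 0 sigma(1) ... sigma(n)
   are distinct, so negation reverses every comparison between them, and the
   positions counted by dBhat for -sigma are exactly those not counted for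
   sigma: dBhat (-sigma) = n - dBhat sigma. *)

Definition sp_opp n (w : signed_perm n) : signed_perm n :=
  (w.1, [ffun j => ~~ w.2 j]).

Arguments sp_opp {n} w.

Lemma sp_opp_inj n : injective (@sp_opp n).
Proof.
move=> [s e] [s' e'] [-> /(congr1 (fun f : {ffun _ -> bool} => f _)) e_e'].
by congr pair; apply/ffunP => j; apply: negb_inj; have := e_e' j; rewrite !ffunE.
Qed.

Lemma sp_entry_opp n (w : signed_perm n) j : sp_entry (sp_opp w) j = (- sp_entry w j)%R.
Proof. by rewrite /sp_entry ffunE; case: (w.2 j); rewrite ?mulN1r ?mul1r ?opprK. Qed.

Lemma sp_val_opp n (w : signed_perm n) k : sp_val (sp_opp w) k = (- sp_val w k)%R.
Proof.
case: k => [|k] /=; first by rewrite oppr0.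
by case: (insub k) => [j|]; rewrite ?sp_entry_opp ?oppr0.
Qed.

Lemma sp_val_ord n (w : signed_perm n) (k : 'I_n) : sp_val w k.+1 = sp_entry w k.
Proof. by rewrite /= valK. Qed.

Lemma abs_sp_entry n (w : signed_perm n) j : `|sp_entry w j|%N = (w.1 j).+1.
Proof. by rewrite /sp_entry; case: (w.2 j); rewrite ?mulN1r ?mul1r ?abszN. Qed.

Lemma sp_val_succ_neq n (w : signed_perm n) (i : 'I_n) : sp_val w i != sp_val w i.+1.
Proof.
rewrite sp_val_ord; apply/eqP => /(congr1 absz); rewrite abs_sp_entry.
case: i => [[|k] lt_k1_n] //=.
have lt_k_n : k < n by apply: ltnW.
rewrite (insubT (fun k => k < n) lt_k_n) abs_sp_entry => -[] /val_inj /perm_inj.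
by move/(congr1 val) => /= /eqP; rewrite eqn_leq ltnn andbF.
Qed.

Definition dBhat_set n (w : signed_perm n) : {set 'I_n} :=
  [set i : 'I_n | ((sp_val w i < sp_val w i.+1)%R && ~~ odd i)
                  || ((sp_val w i > sp_val w i.+1)%R && odd i)].

Lemma dBhat_setE n (w : signed_perm n) : dBhat w = #|dBhat_set w|.
Proof. by []. Qed.

Lemma dBhat_set_opp n (w : signed_perm n) : dBhat_set (sp_opp w) = ~: dBhat_set w.
Proof.
apply/setP => i; rewrite !inE !sp_val_opp !ltrN2.
have := sp_val_succ_neq w i.
by case: ltgtP; case: (odd i).
Qed.

Lemma dBhat_opp n (w : signed_perm n) : dBhat (sp_opp w) = n - dBhat w.
Proof. by rewrite !dBhat_setE dBhat_set_opp cardsCs setCK card_ord. Qed.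

Lemma dBhat_le n (w : signed_perm n) : dBhat w <= n.
Proof. by rewrite dBhat_setE -[n in _ <= n]card_ord max_card. Qed.

Lemma mul_expr_exprV (R : fieldType) (x : R) m d :
  (x != 0)%R -> d <= m -> (x ^+ m * x^-1 ^+ d = x ^+ (m - d))%R.
Proof.
move=> x0 le_dm; rewrite -{1}(subnK le_dm) exprD -mulrA exprVn.
by rewrite mulfV ?mulr1 ?expf_neq0.
Qed.

Theorem mainTheorem9 (R : fieldType) (n : nat) (x : R) :
  (1 <= n)%N -> (x != 0)%R ->
  (x ^+ n * Bhat_minus n x^-1 = Bhat_plus n x)%R.
Proof.
move=> _ x0.
rewrite /Bhat_plus (reindex_inj (@sp_opp_inj n)) /Bhat_minus mulr_sumr.
apply: eq_big => w; first by rewrite sp_val_opp oppr_gt0.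
by move=> _; rewrite dBhat_opp mul_expr_exprV // dBhat_le.
Qed.
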